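(* Let $G$ be a transitively closed directed acyclic graph on $[n]$ and let $H\subseteq G$ be path consistent and admissible with respect to $G$. Then there exist a partition $\mathcal P$ of $[n]$ and, for each $P\in\mathcal P$, disjoint subsets $L_P,R_P\subseteq P$ such that $E(H)=\bigcup_{P\in\mathcal P}E\big((G|_P)_{L_P,R_P}\big)$.
   Context: Conventions: $G$ is a directed acyclic graph with vertex set $[n]$, every edge $(i,j)\in E(G)$ satisfying $i<j$. A subgraph $H\subseteq G$ means $V(H)=[n]$ and $E(H)\subseteq E(G)$; $H^{un}$ is the underlying undirected graph. $G$ is transitively closed if $(i,j),(j,k)\in E(G)$ implies $(i,k)\in E(G)$. $G|_P$ is the induced subgraph on $P$. For disjoint $L,R$, $G_{L,R}$ is the subgraph with edges $\{(i,j)\in E(G):i\in L,j\in R\}$. Path consistency: for an undirected path $p$ in $H^{un}$ from $u$ to $v$, let $\delta(p)$ be the number of edges traversed (from $u$ to $v$) along their orientation minus the number traversed against it. $H$ is path consistent if any two undirected paths in $H^{un}$ with the same endpoints $u,v$ have equal $\delta$; this common value is $\ell_{uv}$. Within a connected component $C$ of $H^{un}$, a weight source is $u_*\in C$ with $\ell_{u_*v_*}=\max_{u,v\in C}\ell_{uv}$ for some $v_*\in C$. The weight function is $w(i)=\ell_{u_*i}$, $u_*$ any weight source in the component of $i$. $H_{comp}$: directed multigraph whose vertices are the connected components of $H^{un}$, with one edge from the component of $u$ to that of $v$ for each $(u,v)\in E(G)\setminus E(H)$; for such an edge $e$, $\mathsf{wd}(e)=w(u)-w(v)$. $H$ is admissible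 with respect to $G$ if for every directed cycle $\mathcal C$ of $H_{comp}$ (including loops), $\sum_{e\in\mathcal C}\mathsf{wd}(e)>-|\mathcal C|$. *)

From HB Require Import structures.
From mathcomp Require Import all_boot all_order all_algebra.
Set Implicit Arguments. Unset Strict Implicit. Unset Printing Implicit Defensive.
Import Order.TTheory GRing.Theory Num.Theory.

(* Vertices of [n] are represented by 'I_n; a (sub)graph on [n] is its edge
   set, a set of ordered pairs (i,j). *)
Notation edgeset n := {set 'I_n * 'I_n}.

Section Defs.
Variable n : nat.
Implicit Types (G H : edgeset n) (u v : 'I_n).

Definition dag_on G : Prop := forall e, e \in G -> (e.1 < e.2)%N.

Definition trans_closed G : Prop :=
  forall i j k, (i, j) \in G -> (j, k) \in G -> (i, k) \in G.

Definition Hun H : rel 'I_n := fun a b => ((a, b) \in H) || ((b, a) \in H).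

Definition conn H : rel 'I_n := connect (Hun H).

Definition upath H u (p : seq 'I_n) : bool := path (Hun H) u p && uniq (u :: p).

Fixpoint delta H u (p : seq 'I_n) : int :=
  match p with
  | [::] => 0
  | v :: p' => ((if (u, v) \in H then 1 else if (v, u) \in H then -1 else 0)
                + delta H v p')%R
  end.

Definition path_consistent H : Prop :=
  forall u p q, upath H u p -> upath H u q -> last u p = last u q ->
    delta H u p = delta H u q.

(* ellR H u v k : some path from u to v in H^un has delta = k
   (under path consistency, k = ell_{uv}) *)
Definition ellR H u v (k : int) : Prop :=
  exists p, [/\ upath H u p, last u p = v & delta H u p = k].

Definition weight_source H (us : 'I_n) : Prop :=
  exists vs ks, ellR H us vs ks /\
    forall u v k, conn H us u -> conn H us v -> ellR H u v k -> (k <= ks)%R.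

Definition weight_fun H (w : 'I_n -> int) : Prop :=
  forall i, exists us, weight_source H us /\ ellR H us i (w i).

(* directed cycles of H_comp (including loops): nonempty sequences of edges
   of G \ H, the head component of each edge being the tail component of
   the next (cyclically), visiting pairwise distinct components. *)
Definition comp_cycle G H (es : seq ('I_n * 'I_n)) : bool :=
  [&& es != [::], all (fun e => e \in G :\: H) es,
      cycle (fun e f => conn H e.2 f.1) es &
      pairwise (fun e f => ~~ conn H e.1 f.1) es].

Definition admissible G H : Prop :=
  exists w, weight_fun H w /\
    forall es, comp_cycle G H es ->
      (- (size es)%:Z < \sum_(e <- es) (w e.1 - w e.2))%R.

Definition block_edges G (P L R : {set 'I_n}) : {set 'I_n * 'I_n} :=
  [set e in G | [&& e.1 \in P, e.2 \in P, e.1 \in L & e.2 \in R]].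

End Defs.

From HB Require Import structures.
From mathcomp Require Import all_boot all_order all_algebra.
From mathcomp Require Import zify.
Set Implicit Arguments. Unset Strict Implicit. Unset Printing Implicit Defensive.
Import Order.TTheory GRing.Theory Num.Theory.

(* Path consistency makes ell_{uv} a well-defined additive, antisymmetric
   function on each component, so w y = w x + ell_{xy} and w >= 0 (a weight
   source realises the maximal ell).  Admissibility applied to the loop of a
   non-H edge (a,b) inside a component gives w b <= w a.  Hence H has no
   directed path a -> b -> c: the G-edge (a,c) given by transitivity would have
   w c = w a + 2, contradicting both w c = w a + 1 (if in H) and w c <= w a.
   Without 2-chains the edges of any walk alternate in direction, so w <= 1:
   every H-edge goes from weight 0 to weight 1 and, again by the loop
   inequality, every G-edge from weight 0 to weight 1 inside a component lies
   in H.  The components of H^un with L = {w = 0} and R = {w = 1} are then the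
   required partition. *)

Local Open Scope ring_scope.

Section Walks.
Variables (n : nat) (H : edgeset n).

Definition step u v : int :=
  if (u, v) \in H then 1 else if (v, u) \in H then -1 else 0.

Lemma Hun_sym : symmetric (Hun H).
Proof. by move=> a b; rewrite /Hun orbC. Qed.

Lemma conn_sym a b : conn H a b = conn H b a.
Proof. exact: (sym_connect_sym Hun_sym). Qed.

Lemma delta_cat u p1 p2 :
  delta H u (p1 ++ p2) = delta H u p1 + delta H (last u p1) p2.
Proof.
elim: p1 u => [|v p IH] u /=; first by rewrite add0r.
by rewrite IH addrA.
Qed.

Lemma delta_rcons u p v :
  delta H u (rcons p v) = delta H u p + step (last u p) v.
Proof. by rewrite -cats1 delta_cat /= addr0. Qed.

Lemma delta_le1_chain_free u p :
  (forall a b c, (a, b) \in H -> (b, c) \in H -> False) ->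
  path (Hun H) u p -> delta H u p <= 1.
Proof.
move=> chain_free.
suff bound v : path (Hun H) v p ->
    delta H v p <= (if [exists a, (a, v) \in H] then 0 else 1).
  by move/bound; case: ifP => _; lia.
elim: p v => [|x p IH] v /=; first by case: ifP.
have no_pred y z : (y, z) \in H -> [exists a, (a, y) \in H] = false.
  by move=> yz; apply/negbTE/existsPn => a; apply/negP => ay; exact: chain_free ay yz.
case/andP=> vx /IH {IH}; case/orP: vx => [vxH | xvH].
- have -> : [exists a, (a, x) \in H] by apply/existsP; exists v.
  rewrite vxH (no_pred _ _ vxH); lia.
- have -> : (v, x) \in H = false.
    by apply/negbTE/negP => vxH; exact: chain_free vxH xvH.
  have -> : [exists a, (a, v) \in H] by apply/existsP; exists x.
  rewrite xvH (no_pred _ _ xvH); lia.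
Qed.

End Walks.

Section PathConsistency.
Variables (n : nat) (H : edgeset n).
Hypotheses (dagH : dag_on H) (pcH : path_consistent H).

Lemma H_noloop a : (a, a) \notin H.
Proof. by apply/negP=> /dagH /=; rewrite ltnn. Qed.

Lemma H_asym a b : (a, b) \in H -> (b, a) \notin H.
Proof.
move=> /dagH /= ab; apply/negP=> /dagH /= ba.
by move: (ltn_trans ab ba); rewrite ltnn.
Qed.

Lemma Hun_neq u v : Hun H u v -> u != v.
Proof. by apply: contraTneq => ->; rewrite /Hun orbb H_noloop. Qed.

Lemma step_anti u v : Hun H u v -> step H v u = - step H u v.
Proof.
rewrite /step /Hun => /orP[] uv; first by rewrite (negbTE (H_asym uv)) uv.
by rewrite uv (negbTE (H_asym uv)).
Qed.

Lemma upath_edge u v : Hun H u v -> upath H u [:: v].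
Proof. by move=> uv; rewrite /upath /= uv inE (Hun_neq uv). Qed.

(* A walk revisiting v is cut at its first visit; the discarded closed walk
   v ~> y -> v has delta 0 by path consistency applied to v ~> y and v -> y. *)
Lemma ellR_walk u p : path (Hun H) u p -> ellR H u (last u p) (delta H u p).
Proof.
elim/last_ind: p => [_ | p v IH]; first by exists [::].
rewrite rcons_path last_rcons delta_rcons => /andP[/IH [q [/andP[Pq Uq] <- <-]] e].
have [vq | vq] := boolP (v \in u :: q); last first.
  exists (rcons q v); split; rewrite ?last_rcons ?delta_rcons //.
  by rewrite /upath rcons_path Pq e -rcons_cons rcons_uniq vq Uq.
case/splitPl: q / vq Pq Uq e => q1 q2 lq1.
rewrite cat_path -cat_cons cat_uniq last_cat lq1.
case/andP=> P1 P2 /and3P[U1 q2_fresh U2] e.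
have Uq2 : upath H v q2.
  rewrite /upath P2 /= U2 andbT; apply: contra q2_fresh => vq2.
  by apply/hasP; exists v => //; rewrite -lq1 mem_last.
have vy : Hun H v (last v q2) by rewrite Hun_sym.
have := pcH Uq2 (upath_edge vy) erefl => /= D2.
exists q1; split => //; first by rewrite /upath P1 U1.
by rewrite delta_cat lq1 D2 addr0 (step_anti vy) addrK.
Qed.

Lemma walk_rev u p : path (Hun H) u p ->
  exists r, [/\ path (Hun H) (last u p) r, last (last u p) r = u &
               delta H (last u p) r = - delta H u p].
Proof.
elim: p u => [|v p IH] u /=; first by exists [::]; rewrite oppr0.
case/andP=> e /IH [r [Pr Lr Dr]].
exists (rcons r u); split; rewrite ?last_rcons //.
- by rewrite rcons_path Pr Lr Hun_sym.
- by rewrite delta_rcons Dr Lr (step_anti e) opprD addrC.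
Qed.

Lemma ellR_uniq u v k1 k2 : ellR H u v k1 -> ellR H u v k2 -> k1 = k2.
Proof.
move=> [p [Up Lp <-]] [q [Uq Lq <-]]; apply: pcH => //.
by rewrite Lp Lq.
Qed.

Lemma ellR_rev u v k : ellR H u v k -> ellR H v u (- k).
Proof.
move=> [p [/andP[Pp _] <- <-]].
have [r [Pr Lr <-]] := walk_rev Pp.
by rewrite -{2}Lr; apply: ellR_walk.
Qed.

Lemma ellR_trans a b c k1 k2 :
  ellR H a b k1 -> ellR H b c k2 -> ellR H a c (k1 + k2).
Proof.
move=> [p [/andP[Pp _] Lp <-]] [q [/andP[Pq _] <- <-]].
have : path (Hun H) a (p ++ q) by rewrite cat_path Pp Lp.
by move/ellR_walk; rewrite last_cat delta_cat Lp.
Qed.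

Lemma ellR_conn u v k : ellR H u v k -> conn H u v.
Proof. by move=> [p [/andP[Pp _] <- _]]; apply/connectP; exists p. Qed.

Lemma conn_ellR u v : conn H u v -> exists k, ellR H u v k.
Proof. by move/connectP=> [p Pp ->]; exists (delta H u p); apply: ellR_walk. Qed.

Lemma ellR_edge a b : (a, b) \in H -> ellR H a b 1.
Proof.
move=> ab; have e : Hun H a b by rewrite /Hun ab.
by exists [:: b]; split; rewrite ?upath_edge //= ab addr0.
Qed.

End PathConsistency.

Section Weight.
Variables (n : nat) (H : edgeset n) (w : 'I_n -> int).
Hypotheses (dagH : dag_on H) (pcH : path_consistent H) (wf : weight_fun H w).

Lemma weight_sources_ell0 us us' : weight_source H us -> weight_source H us' ->
  conn H us us' -> ellR H us' us 0.
Proof.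
move=> [vs [ks [E B]]] [vs' [ks' [E' B']]] c.
have c' : conn H us' us by rewrite conn_sym.
have cv : conn H us vs := ellR_conn E.
have cv' : conn H us' vs' := ellR_conn E'.
have [k K] := conn_ellR dagH pcH c'.
have ks_le : ks <= ks' := B' _ _ _ c' (connect_trans c' cv) E.
have ks'_le : ks' <= ks := B _ _ _ c (connect_trans c cv') E'.
have via_us : k + ks <= ks'.
  exact: B' _ _ _ (connect0 _ _) (connect_trans c' cv) (ellR_trans dagH pcH K E).
have via_us' : - k + ks' <= ks.
  have K' := ellR_rev dagH pcH K.
  exact: B _ _ _ (connect0 _ _) (connect_trans c cv') (ellR_trans dagH pcH K' E').
by have <- : k = 0 by lia.
Qed.

Lemma weight_ellR x y k : ellR H x y k -> w y = w x + k.
Proof.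
move=> Exy.
have [us [Wus Ex]] := wf x; have [us' [Wus' Ey]] := wf y.
have c : conn H us us'.
  apply: connect_trans (ellR_conn (ellR_trans dagH pcH Ex Exy)) _.
  by rewrite -/(conn H y us') conn_sym (ellR_conn Ey).
have := ellR_trans dagH pcH (ellR_trans dagH pcH (weight_sources_ell0 Wus Wus' c) Ex) Exy.
by move/(ellR_uniq pcH Ey) => ->; rewrite add0r.
Qed.

Lemma weight_ge0 x : 0 <= w x.
Proof.
have [us [[vs [ks [E B]]] Ex]] := wf x.
have Exvs := ellR_trans dagH pcH (ellR_rev dagH pcH Ex) E.
by have := B _ _ _ (ellR_conn Ex) (ellR_conn E) Exvs; lia.
Qed.

Lemma weight_edge a b : (a, b) \in H -> w b = w a + 1.
Proof. by move/(ellR_edge dagH)/weight_ellR. Qed.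

End Weight.

Lemma comp_cycle_loop n (G H : edgeset n) a b :
  (a, b) \in G :\: H -> conn H a b -> comp_cycle G H [:: (a, b)].
Proof. by move=> abGH ab; rewrite /comp_cycle /= abGH conn_sym ab. Qed.

Section Admissible.
Variables (n : nat) (G H : edgeset n) (w : 'I_n -> int).
Hypotheses (dagG : dag_on G) (trG : trans_closed G) (HG : H \subset G).
Hypotheses (pcH : path_consistent H) (wf : weight_fun H w).
Hypothesis adm : forall es, comp_cycle G H es ->
  - (size es)%:Z < \sum_(e <- es) (w e.1 - w e.2).

Let dagH : dag_on H.
Proof. by move=> e /(subsetP HG) /dagG. Qed.

Lemma weight_loop a b : (a, b) \in G -> (a, b) \notin H -> conn H a b ->
  w b <= w a.
Proof.
move=> abG abH ab; have abGH : (a, b) \in G :\: H by rewrite inE abG abH.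
by have := adm (comp_cycle_loop abGH ab); rewrite big_seq1 /=; lia.
Qed.

Lemma H_chain_free a b c : (a, b) \in H -> (b, c) \in H -> False.
Proof.
move=> ab bc; have acG : (a, c) \in G by apply: (trG (j := b)); apply: (subsetP HG).
have := weight_edge dagH pcH wf ab; have := weight_edge dagH pcH wf bc.
have [acH | acH] := boolP ((a, c) \in H).
  by have := weight_edge dagH pcH wf acH; lia.
have ac : conn H a c.
  exact: ellR_conn (ellR_trans dagH pcH (ellR_edge dagH ab) (ellR_edge dagH bc)).
by have := weight_loop acG acH ac; lia.
Qed.

Lemma weight_le1 x : w x <= 1.
Proof.
have [us [_ [p [/andP[Pp _] <- <-]]]] := wf x.
exact: delta_le1_chain_free H_chain_free Pp.
Qed.

Lemma weight_H_edge a b : (a, b) \in H -> w a = 0 /\ w b = 1.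
Proof.
move=> ab; have := weight_edge dagH pcH wf ab.
have := weight_ge0 dagH pcH wf a; have := weight_le1 b; lia.
Qed.

End Admissible.

Lemma component_blocks n (G H : edgeset n) (L0 R0 : {set 'I_n}) :
  H \subset G -> [disjoint L0 & R0] ->
  (forall a b, (a, b) \in H -> (a \in L0) && (b \in R0)) ->
  (forall a b, (a, b) \in G -> conn H a b -> a \in L0 -> b \in R0 -> (a, b) \in H) ->
  exists (Pt : {set {set 'I_n}}) (L R : {set 'I_n} -> {set 'I_n}),
    [/\ partition Pt [set: 'I_n],
        (forall P, P \in Pt -> [/\ L P \subset P, R P \subset P & [disjoint L P & R P]]) &
        H = \bigcup_(P in Pt) block_edges G P (L P) (R P)].
Proof.
move=> HG LR0 H_LR G_LR_H.
have conn_equiv : {in [set: 'I_n] & &, equivalence_rel (conn H)}.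
  move=> x y z _ _ _; split=> [|xy]; first exact: connect0.
  have yx : conn H y x by rewrite conn_sym.
  by apply/idP/idP; apply: connect_trans.
set Pt := equivalence_partition (conn H) [set: 'I_n].
have /and3P[/eqP coverT trivPt _] := equivalence_partitionP conn_equiv.
have pblockE := pblock_equivalence_partition conn_equiv.
exists Pt, (fun P => P :&: L0), (fun P => P :&: R0); split.
- exact: equivalence_partitionP.
- move=> P _; rewrite !subsetIl; split=> //.
  by apply: disjointWl (subsetIr P L0) (disjointWr (subsetIr P R0) LR0).
apply/setP => -[a b]; apply/idP/bigcupP => [ab | [P PPt]].
  have /andP[aL bR] := H_LR _ _ ab.
  have aPt : a \in cover Pt by rewrite coverT.
  exists (pblock Pt a); first exact: pblock_mem.
  rewrite !inE /= (subsetP HG _ ab) mem_pblock aPt pblockE ?inE //= aL bR.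
  have ab_conn : conn H a b by apply: connect1; rewrite /Hun ab.
  by rewrite ab_conn.
rewrite !inE /= => /and5P[abG aP bP /andP[_ aL] /andP[_ bR]].
apply: G_LR_H => //.
by rewrite -pblockE ?inE // (def_pblock trivPt PPt aP).
Qed.

Theorem mainTheorem15 (n : nat) (G H : {set 'I_n * 'I_n}) :
  dag_on G -> trans_closed G -> H \subset G ->
  path_consistent H -> admissible G H ->
  exists (Pt : {set {set 'I_n}}) (L R : {set 'I_n} -> {set 'I_n}),
    [/\ partition Pt [set: 'I_n],
        (forall P, P \in Pt -> [/\ L P \subset P, R P \subset P & [disjoint L P & R P]]) &
        H = \bigcup_(P in Pt) block_edges G P (L P) (R P)].
Proof.
move=> dagG trG HG pcH [w [wf adm]].
apply: (component_blocks (L0 := [set x | w x == 0]) (R0 := [set x | w x == 1])) => //.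
- by apply/pred0P => x /=; rewrite !inE; case: eqP => // ->.
- move=> a b /(weight_H_edge dagG trG HG pcH wf adm) [wa wb].
  by rewrite !inE wa wb !eqxx.
- move=> a b abG ab; rewrite !inE => /eqP wa /eqP wb.
  apply/negPn/negP => abH.
  by have := weight_loop HG adm abG abH ab; rewrite wa wb.
Qed.
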